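(* Let $n$ DMUs, indexed by $J$, each use $m$ inputs (indexed by $I$) and produce $s$ outputs (indexed by $R$), with $n\ge2(m+s)$ and all data $x_{ij}>0$, $y_{rj}>0$. Let $o$ be a DMU that is efficient in the PT model (PT efficiency equal to $1$). For a goal price $\tau_o>0$, the TVG (primal) program of the sPT model is $$\Delta_o^{sPT}=\max_{v_o,u_o}\ -\sum_{i}v_{io}x_{io}+\sum_r u_{ro}y_{ro}$$ subject to $-\sum_i v_{io}x_{ij}+\sum_r u_{ro}y_{rj}\le0$ for all $j\in J\setminus\{o\}$, $x_{io}v_{io}\ge\tau_o$ ($i\in I$), $y_{ro}u_{ro}\ge\tau_o$ ($r\in R$), with $v_o\ge0$ and $u_o$ free. Let $(v_o^\#,u_o^\#)$ be optimal for $\tau_o=1$ (Step I), $\bar t=1/\sum_r u^\#_{ro}y_{ro}$, and $(v_o^\star,u_o^\star)=\bar t(v_o^\#,u_o^\#)$ (Step II). With $\alpha_o^\star=\sum_i v^\star_{io}x_{io}$ and $\beta_o^\star=\sum_r u^\star_{ro}y_{ro}$, the super-pure-technical efficiency $E_o^{sPT\star}=\beta_o^\star/\alpha_o^\star$ satisfies $E_o^{sPT\star}\ge1$.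
   Context: The PT model for DMU-$o$ is the linear program $\min\sum_i v_{io}x_{io}-\sum_r u_{ro}y_{ro}$ s.t. $\sum_i v_{io}x_{ij}-\sum_r u_{ro}y_{rj}\ge0$ ($j\in J$), $x_{io}v_{io}\ge\tau_o$, $y_{ro}u_{ro}\ge\tau_o$, $v_o,u_o$ free; its efficiency is $\sum_r u^\star_{ro}y_{ro}/\sum_i v^\star_{io}x_{io}$ at an optimal solution. The TAP (dual) program of the sPT model is $\min\sum_iQ_{io}\tau_o+\sum_rP_{ro}\tau_o$ s.t. $-\sum_{j\ne o}x_{ij}\pi_{jo}+Q_{io}x_{io}\ge-x_{io}$, $\sum_{j\ne o}y_{rj}\pi_{jo}+P_{ro}y_{ro}=y_{ro}$, $\pi_o,Q_o,P_o\ge0$. *)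

From mathcomp Require Import all_boot all_order all_algebra.
Set Implicit Arguments. Unset Strict Implicit. Unset Printing Implicit Defensive.
Import Order.TTheory GRing.Theory Num.Theory.
Local Open Scope ring_scope.

Section DEA.
Variables (R : realFieldType) (m s n : nat).
Variables (x : 'I_m -> 'I_n -> R) (y : 'I_s -> 'I_n -> R) (o : 'I_n).

Definition vx (v : 'I_m -> R) (j : 'I_n) : R := \sum_(i < m) v i * x i j.
Definition uy (u : 'I_s -> R) (j : 'I_n) : R := \sum_(r < s) u r * y r j.

Definition PT_feasible (tau : R) (v : 'I_m -> R) (u : 'I_s -> R) : Prop :=
  (forall j : 'I_n, vx v j - uy u j >= 0) /\
  (forall i : 'I_m, x i o * v i >= tau) /\
  (forall r : 'I_s, y r o * u r >= tau).

Definition PT_obj (v : 'I_m -> R) (u : 'I_s -> R) : R := vx v o - uy u o.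

Definition PT_optimal (tau : R) v u : Prop :=
  PT_feasible tau v u /\
  forall v' u', PT_feasible tau v' u' -> PT_obj v u <= PT_obj v' u'.

Definition PT_efficiency (v : 'I_m -> R) (u : 'I_s -> R) : R := uy u o / vx v o.

Definition PT_efficient : Prop :=
  exists tau : R, 0 < tau /\
    exists v u, PT_optimal tau v u /\ PT_efficiency v u = 1.

Definition TVG_feasible (tau : R) (v : 'I_m -> R) (u : 'I_s -> R) : Prop :=
  (forall j : 'I_n, j != o -> - vx v j + uy u j <= 0) /\
  (forall i : 'I_m, x i o * v i >= tau) /\
  (forall r : 'I_s, y r o * u r >= tau) /\
  (forall i : 'I_m, 0 <= v i).

Definition TVG_obj (v : 'I_m -> R) (u : 'I_s -> R) : R := - vx v o + uy u o.

Definition TVG_optimal (tau : R) v u : Prop :=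
  TVG_feasible tau v u /\
  forall v' u', TVG_feasible tau v' u' -> TVG_obj v' u' <= TVG_obj v u.

End DEA.

(* A PT-efficient DMU o has PT weights (v, u) with uy u o = vx v o.  Rescaled to goal
   price 1 they become TVG-feasible (the TVG program only drops the constraint of DMU o
   and asks v >= 0, which holds since x_io v_io >= tau > 0) with objective 0.  Hence the
   TVG optimum satisfies uy us o >= vx vs o, and the efficiency ratio is invariant under
   the Step II rescaling by tbar. *)

From mathcomp Require Import all_boot all_order all_algebra.
Set Implicit Arguments. Unset Strict Implicit. Unset Printing Implicit Defensive.
Import Order.TTheory GRing.Theory Num.Theory.
Local Open Scope ring_scope.

Lemma sumr_ord_gt0 (R : numDomainType) k (f : 'I_k -> R) :
  (0 < k)%N -> (forall i, 0 < f i) -> 0 < \sum_(i < k) f i.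
Proof.
case: k f => // k f _ f_gt0; rewrite big_ord_recl.
by apply: ltr_pwDl; [exact: f_gt0 | apply: sumr_ge0 => i _; exact: ltW].
Qed.

Section TVG.

Variables (R : realFieldType) (m s n : nat).
Variables (x : 'I_m -> 'I_n -> R) (y : 'I_s -> 'I_n -> R) (o : 'I_n).

Lemma vxZ c v j : vx x (fun i => c * v i) j = c * vx x v j.
Proof. by rewrite /vx mulr_sumr; apply: eq_bigr => i _; rewrite mulrA. Qed.

Lemma uyZ c u j : uy y (fun r => c * u r) j = c * uy y u j.
Proof. by rewrite /uy mulr_sumr; apply: eq_bigr => r _; rewrite mulrA. Qed.

Lemma vx_gt0 tau v : (0 < m)%N -> 0 < tau ->
  (forall i, tau <= x i o * v i) -> 0 < vx x v o.
Proof.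
move=> m_gt0 tau_gt0 v_ge; apply: sumr_ord_gt0 => // i.
by rewrite mulrC (lt_le_trans tau_gt0).
Qed.

Lemma uy_gt0 tau u : (0 < s)%N -> 0 < tau ->
  (forall r, tau <= y r o * u r) -> 0 < uy y u o.
Proof.
move=> s_gt0 tau_gt0 u_ge; apply: sumr_ord_gt0 => // r.
by rewrite mulrC (lt_le_trans tau_gt0).
Qed.

Lemma PT_efficiencyZ c v u : c != 0 ->
  PT_efficiency x y o (fun i => c * v i) (fun r => c * u r) = PT_efficiency x y o v u.
Proof. by move=> c_neq0; rewrite /PT_efficiency vxZ uyZ invfM mulrACA divff ?mul1r. Qed.

Lemma PT_efficiency_ge1 v u : 0 < vx x v o ->
  0 <= TVG_obj x y o v u -> 1 <= PT_efficiency x y o v u.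
Proof.
move=> alpha_gt0 obj_ge0.
by rewrite /PT_efficiency ler_pdivlMr // mul1r -subr_ge0 addrC.
Qed.

Lemma PT_feasible_TVG_feasible tau v u : 0 < tau -> (forall i, 0 < x i o) ->
  PT_feasible x y o tau v u -> TVG_feasible x y o tau v u.
Proof.
move=> tau_gt0 x_gt0 [dominated [v_ge u_ge]]; split; [|split; [|split]] => //.
- by move=> j _; rewrite addrC subr_le0 -subr_ge0.
- by move=> i; rewrite -(pmulr_rge0 _ (x_gt0 i)) ltW // (lt_le_trans tau_gt0 (v_ge i)).
Qed.

Lemma TVG_feasibleZ tau c v u : 0 < c -> TVG_feasible x y o tau v u ->
  TVG_feasible x y o (c * tau) (fun i => c * v i) (fun r => c * u r).
Proof.
move=> c_gt0 [dominated [v_ge [u_ge v_ge0]]]; split; [|split; [|split]].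
- by move=> j neq_jo; rewrite vxZ uyZ -mulrN -mulrDr pmulr_rle0 // dominated.
- by move=> i; rewrite mulrCA ler_pM2l.
- by move=> r; rewrite mulrCA ler_pM2l.
- by move=> i; rewrite mulr_ge0 // ltW.
Qed.

Lemma TVG_optimal_obj_ge0 v u : (0 < m)%N -> (forall i, 0 < x i o) ->
  PT_efficient x y o -> TVG_optimal x y o 1 v u -> 0 <= TVG_obj x y o v u.
Proof.
move=> m_gt0 x_gt0 [tau [tau_gt0 [v' [u' [[PTfeas _] eff1]]]]] [_ v_u_max].
have vx'_gt0 : 0 < vx x v' o by case: PTfeas => _ [v'_ge _]; exact: vx_gt0 v'_ge.
have balanced : uy y u' o = vx x v' o.
  by move: eff1; rewrite /PT_efficiency => /(canRL (divfK (lt0r_neq0 vx'_gt0))); rewrite mul1r.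
have feas1 : TVG_feasible x y o 1 (fun i => tau^-1 * v' i) (fun r => tau^-1 * u' r).
  rewrite -(mulVf (lt0r_neq0 tau_gt0)); apply: TVG_feasibleZ; first by rewrite invr_gt0.
  exact: PT_feasible_TVG_feasible.
by move: (v_u_max _ _ feas1); rewrite /TVG_obj vxZ uyZ balanced addNr.
Qed.

End TVG.

Theorem theorem6 (R : realFieldType) (m s n : nat)
    (x : 'I_m -> 'I_n -> R) (y : 'I_s -> 'I_n -> R) (o : 'I_n)
    (hm : (0 < m)%N) (hs : (0 < s)%N) (hn : (2 * (m + s) <= n)%N)
    (hx : forall i j, 0 < x i j) (hy : forall r j, 0 < y r j)
    (heff : PT_efficient x y o)
    (vs : 'I_m -> R) (us : 'I_s -> R)
    (hopt : TVG_optimal x y o 1 vs us) :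
  let tbar := (uy y us o)^-1 in
  let vstar := fun i => tbar * vs i in
  let ustar := fun r => tbar * us r in
  let alpha := vx x vstar o in
  let beta := uy y ustar o in
  1 <= beta / alpha.
Proof.
have [[_ [vs_ge [us_ge _]]] _] := hopt.
have tbar_neq0 : (uy y us o)^-1 != 0 by rewrite invr_neq0 // lt0r_neq0 // (uy_gt0 hs ltr01 us_ge).
rewrite /= -/(PT_efficiency x y o _ _) PT_efficiencyZ //.
apply: PT_efficiency_ge1; first exact: vx_gt0 hm ltr01 vs_ge.
exact: TVG_optimal_obj_ge0 hm (fun i => hx i o) heff hopt.
Qed.
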